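(* Let $(X,\tau_1,\tau_2)$ be a bitopological space which is a $j$-$P$-space, $i,j\in\{1,2\}$, $i\ne j$. Let $\{U_\alpha:\alpha\in\Delta\}$ be a family of $(i,j)$-regular open sets and let $\{V_\lambda:\lambda\in\Lambda\}$ be a family of $i$-open sets which refines $\{U_\alpha\}$ and is $j$-locally countable. Then $\{i\text{-}\mathrm{int}(j\text{-}\mathrm{cl}(V_\lambda)):\lambda\in\Lambda\}$ is a family of $\tau^s_{(i,j)}$-open sets which refines $\{U_\alpha:\alpha\in\Delta\}$ and is locally countable with respect to $\tau^s_{(j,i)}$ (i.e. every point has a $\tau^s_{(j,i)}$-open neighbourhood meeting at most countably many of its members).
   Context: $(X,\tau_1,\tau_2)$ is a bitopological space and $i,j\in\{1,2\}$, $i\neq j$. For $k\in\{1,2\}$, $k\text{-}\mathrm{int}$, $k\text{-}\mathrm{cl}$ denote interior and closure with respect to $\tau_k$; ''$k$-open'' means $\tau_k$-open. A set $A$ is $(i,j)$-regular open if $A=i\text{-}\mathrm{int}(j\text{-}\mathrm{cl}(A))$. The pairwise semiregularization of $(X,\tau_1,\tau_2)$ is $(X,\tau^s_{(1,2)},\tau^s_{(2,1)})$, where $\tau^s_{(i,j)}$ is the topology on $X$ having as a base the family of all $(i,j)$-regular open sets of $(X,\tau_1,\tau_2)$. A family $\mathcal V$ refines $\mathcal U$ if each member of $\mathcal V$ is contained in some member of $\mathcal U$. A family $\mathcal V$ is $k$-locally countable if every $x\in X$ has a $k$-open neighbourhood meeting at most countably many members of $\mathcal V$. $X$ is a $k$-$P$-space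 if every intersection of countably many $k$-open sets is $k$-open. *)

Set Implicit Arguments.

Section BiTop.
Variable X : Type.

Definition subset (A B : X -> Prop) : Prop := forall x, A x -> B x.

Definition is_topology (T : (X -> Prop) -> Prop) : Prop :=
  T (fun _ => True) /\
  (forall F : (X -> Prop) -> Prop,
      (forall A, F A -> T A) -> T (fun x => exists A, F A /\ A x)) /\
  (forall A B, T A -> T B -> T (fun x => A x /\ B x)).

Definition interior (T : (X -> Prop) -> Prop) (A : X -> Prop) : X -> Prop :=
  fun x => exists U, T U /\ U x /\ subset U A.

Definition closure (T : (X -> Prop) -> Prop) (A : X -> Prop) : X -> Prop :=
  fun x => forall U, T U -> U x -> exists y, U y /\ A y.

Definition regular_open (Ti Tj : (X -> Prop) -> Prop) (A : X -> Prop) : Prop :=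
  forall x, A x <-> interior Ti (closure Tj A) x.

(* tau^s_(i,j): the topology having the (i,j)-regular open sets as a base,
   i.e. its open sets are the unions of (i,j)-regular open sets. *)
Definition semireg (Ti Tj : (X -> Prop) -> Prop) : (X -> Prop) -> Prop :=
  fun G => forall x, G x -> exists B, regular_open Ti Tj B /\ B x /\ subset B G.

Definition P_space (T : (X -> Prop) -> Prop) : Prop :=
  forall G : nat -> X -> Prop, (forall n, T (G n)) -> T (fun x => forall n, G n x).

Definition refines (Lam Del : Type) (V : Lam -> X -> Prop) (U : Del -> X -> Prop) : Prop :=
  forall l, exists a, subset (V l) (U a).

End BiTop.

Definition countable_set (I : Type) (S : I -> Prop) : Prop :=
  exists f : I -> nat, forall a b, S a -> S b -> f a = f b -> a = b.

Definition locally_countable (X Lam : Type) (T : (X -> Prop) -> Prop)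
  (V : Lam -> X -> Prop) : Prop :=
  forall x, exists W, T W /\ W x /\
    countable_set (fun l => exists y, W y /\ V l y).


(* Replacing each member V of the family by int_i cl_j V keeps it inside the
   same regular open set (int_i cl_j is monotone and fixes regular open sets),
   and the result is (i,j)-regular open, hence open in the semiregularization.
   For local countability, a j-open W meeting countably many V's gives the
   (j,i)-regular open neighbourhood int_j cl_i W; if it meets int_i cl_j V, then
   W meets V, because an i-open set inside cl_j V meeting cl_i W meets W, and
   the j-open W meeting cl_j V meets V. *)

Section InteriorClosure.
Variable X : Type.
Implicit Types (T Ti Tj : (X -> Prop) -> Prop) (A B W : X -> Prop).

Lemma subset_interior_closure Ti Tj A :
  Ti A -> subset A (interior Ti (closure Tj A)).
Proof.
  intros HA x Ax. exists A; split; [exact HA | split; [exact Ax |]].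
  intros y Ay O _ Oy. exists y; split; assumption.
Qed.

Lemma interior_closure_mono Ti Tj A B :
  subset A B -> subset (interior Ti (closure Tj A)) (interior Ti (closure Tj B)).
Proof.
  intros HAB x [O [HO [Ox HOcl]]].
  exists O; split; [exact HO | split; [exact Ox |]].
  intros y Oy Q HQ Qy. destruct (HOcl y Oy Q HQ Qy) as [z [Qz Az]].
  exists z; split; [exact Qz | exact (HAB z Az)].
Qed.

Lemma closure_interior_closure T Ti A :
  subset (closure T (interior Ti (closure T A))) (closure T A).
Proof.
  intros x Hx Q HQ Qx. destruct (Hx Q HQ Qx) as [z [Qz [O [_ [Oz HOcl]]]]].
  exact (HOcl z Oz Q HQ Qz).
Qed.

Lemma regular_open_interior_closure Ti Tj A :
  Ti A -> regular_open Ti Tj (interior Ti (closure Tj A)).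
Proof.
  intros HA x; split.
  - apply interior_closure_mono, subset_interior_closure. exact HA.
  - intros [O [HO [Ox HOcl]]]. exists O; split; [exact HO | split; [exact Ox |]].
    intros y Oy. apply (closure_interior_closure Tj Ti A), HOcl, Oy.
Qed.

Lemma regular_open_semireg Ti Tj B :
  regular_open Ti Tj B -> semireg Ti Tj B.
Proof.
  intros HB x Bx. exists B; split; [exact HB | split; [exact Bx |]].
  intros y By; exact By.
Qed.

Lemma interior_closure_sub_regular_open Ti Tj A B :
  regular_open Ti Tj B -> subset A B -> subset (interior Ti (closure Tj A)) B.
Proof.
  intros HB HAB x Hx. apply (proj2 (HB x)).
  exact (interior_closure_mono Ti Tj A B HAB x Hx).
Qed.

Lemma interior_closure_meet Ti Tj W A :
  Tj W ->
  (exists y, interior Tj (closure Ti W) y /\ interior Ti (closure Tj A) y) ->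
  exists y, W y /\ A y.
Proof.
  intros HW [y [[G [_ [Gy HGcl]]] [O [HO [Oy HOcl]]]]].
  destruct (HGcl y Gy O HO Oy) as [z [Oz Wz]].
  exact (HOcl z Oz W HW Wz).
Qed.

End InteriorClosure.

Lemma countable_set_sub (I : Type) (S S' : I -> Prop) :
  (forall a, S' a -> S a) -> countable_set S -> countable_set S'.
Proof.
  intros HS [f Hf]. exists f. intros a b Ha Hb. apply Hf; apply HS; assumption.
Qed.

Theorem lemma2 (X : Type) (Ti Tj : (X -> Prop) -> Prop)
  (Delta Lambda : Type) (U : Delta -> X -> Prop) (V : Lambda -> X -> Prop) :
  is_topology Ti -> is_topology Tj ->
  P_space Tj ->
  (forall a, regular_open Ti Tj (U a)) ->
  (forall l, Ti (V l)) ->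
  refines V U ->
  locally_countable Tj V ->
  (forall l, semireg Ti Tj (interior Ti (closure Tj (V l)))) /\
  refines (fun l => interior Ti (closure Tj (V l))) U /\
  locally_countable (semireg Tj Ti) (fun l => interior Ti (closure Tj (V l))).
Proof.
  intros _ _ _ HU HV Href Hlc. split; [| split].
  - intros l. apply regular_open_semireg, regular_open_interior_closure, HV.
  - intros l. destruct (Href l) as [a Ha]. exists a.
    exact (interior_closure_sub_regular_open _ Ti Tj (V l) (U a) (HU a) Ha).
  - intros x. destruct (Hlc x) as [W [HW [Wx HWcount]]].
    exists (interior Tj (closure Ti W)). split; [| split].
    + apply regular_open_semireg, regular_open_interior_closure, HW.
    + exact (subset_interior_closure _ Tj Ti W HW x Wx).
    + apply (countable_set_sub _ _ _ (fun l => interior_closure_meet _ Ti Tj W (V l) HW)).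
      exact HWcount.
Qed.
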